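(* Assume $\alpha>\beta+1$, $\beta\ge0$, $\theta>0$, and $\alpha-\beta-1\ge4\theta(\beta+1)$. Let $\rho\in\mathbb R$, let $u(\cdot,\rho)$ be the solution on $[0,\infty)$ of $L(u)+e^{u}=0$, $u(0)=\rho$, $u'(0)=0$, and let $u^*(r)=\ln\{\theta^{\beta+1}(\alpha-\beta-1)\}-\theta\ln r$. Then $u(r,\rho)\neq u^*(r)$ for all $r>0$.
   Context: $L(u)(r)=r^{-\gamma}(r^{\alpha}|u'(r)|^{\beta}u'(r))'$ and $\theta=\gamma+2+\beta-\alpha$. For the $k$-Hessian ($\alpha=d-k$, $\beta=k-1$, $\gamma=d-1$) the condition reads $d\ge 2k+8k^2$. *)

From Stdlib Require Import Reals.
From Coquelicot Require Import Coquelicot.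
Open Scope R_scope.

(* |p|^b * p, with the value 0 at p = 0 (the correct value for b >= 0). *)
Definition signed_pow (b p : R) : R :=
  if Req_EM_T p 0 then 0 else Rpower (Rabs p) b * p.

Definition theta (a b g : R) : R := g + 2 + b - a.

(* Classical solution on [0,oo) of
     r^{-g} (r^a |u'|^b u')' + e^u = 0,  u(0) = rho,  u'(0) = 0
   (u'(0) is the right derivative at 0; the flux r^a |u'|^b u' is
   differentiable on (0,oo) with derivative -r^g e^{u}). *)
Definition is_solution (a b g rho : R) (u : R -> R) : Prop :=
  u 0 = rho /\
  filterlim (fun h => (u h - u 0) / h) (at_right 0) (locally 0) /\
  (forall r, 0 < r -> ex_derive u r) /\
  (forall r, 0 < r ->
     is_derive (fun s => Rpower s a * signed_pow b (Derive u s)) r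
               (- (Rpower r g * exp (u r)))).

Definition u_star (a b g r : R) : R :=
  ln (Rpower (theta a b g) (b + 1) * (a - b - 1)) - theta a b g * ln r.

(* Write m = a-b-1, k = b+1 and let  Phi = -r^a |u'|^b u'  be the flux, so
   that Phi' = r^g e^u.  The flux of u* is th^k r^m, and we compare u with
   u* through the gap  W = u - u*  and the barrier
       H = Phi - th^k r^m e^{2W}.
   1. Phi > 0 on (0,oo): otherwise Phi <= -c < 0 near 0, which forces
      u' >= kappa > 0 near 0, against u'(0) = 0.  Hence u' < 0.
   2. Where W <= 0 and H >= 0 we have H' >= 0 (this is where 4 th <= m is
      used), and where W = 0 and H > 0 we have W' < 0.
   3. Near 0, W < 0 (since u* -> +oo) and H > 0 (Phi(r) ~ r^{th+m} dominates
      th^k r^m e^{2W} ~ r^{m+2 th}).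
   If W(T) = 0, let s0 be the first zero of W after a point del of step 3.
   By step 2, H stays positive on [del,s0], so W'(s0) < 0; but W < 0 just
   before s0 and W(s0) = 0, a contradiction. *)

From Stdlib Require Import Reals Lra Psatz.
From Coquelicot Require Import Coquelicot.
Open Scope R_scope.

Lemma exp_le_exp_iff (x y : R) : exp x <= exp y <-> x <= y.
Proof.
  split; intros H.
  - destruct (Rle_lt_dec x y) as [Hle | Hlt]; [exact Hle |].
    apply exp_increasing in Hlt; lra.
  - destruct H as [Hlt | ->]; [left; apply exp_increasing; exact Hlt | right; reflexivity].
Qed.

Lemma continuity_pt_eps (f : R -> R) (x : R) : continuity_pt f x ->
  forall eps, 0 < eps ->
  exists d, 0 < d /\ forall y, Rabs (y - x) < d -> Rabs (f y - f x) < eps.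
Proof.
  intros Hc eps Heps.
  destruct (Hc eps Heps) as [d [Hd Hnear]].
  exists d; split; [exact Hd |]. intros y Hyx.
  destruct (Req_dec y x) as [-> | Hne].
  - rewrite Rminus_eq_0, Rabs_R0; exact Heps.
  - apply Hnear; split; [split; [exact I | auto] | exact Hyx].
Qed.

Lemma is_derive_continuity_pt (f : R -> R) (x l : R) :
  is_derive f x l -> continuity_pt f x.
Proof.
  intros Df. apply derivable_continuous_pt. exists l. apply is_derive_Reals, Df.
Qed.

Lemma right_increments_small (u : R -> R) :
  filterlim (fun h => (u h - u 0) / h) (at_right 0) (locally 0) ->
  forall eps, 0 < eps ->
  exists d, 0 < d /\ forall h, 0 < h < d -> Rabs (u h - u 0) < eps * h.
Proof.
  intros Hlim eps Heps.
  apply filterlim_locally with (eps := mkposreal eps Heps) in Hlim.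
  destruct Hlim as [d Hd]. exists d. split; [apply cond_pos |].
  intros h [Hh0 Hhd].
  assert (Hball : ball 0 d h).
  { unfold ball; simpl; unfold AbsRing_ball, abs, minus, plus, opp; simpl.
    rewrite Ropp_0, Rplus_0_r, Rabs_right; lra. }
  specialize (Hd h Hball Hh0). revert Hd.
  unfold ball; simpl; unfold AbsRing_ball, abs, minus, plus, opp; simpl.
  rewrite Ropp_0, Rplus_0_r. intros Hq.
  replace (u h - u 0) with ((u h - u 0) / h * h) by (field; lra).
  rewrite Rabs_mult, (Rabs_right h) by lra.
  apply Rmult_lt_compat_r; lra.
Qed.

Lemma no_uniform_slope_floor (u u' : R -> R) (r kap : R) :
  filterlim (fun h => (u h - u 0) / h) (at_right 0) (locally 0) ->
  0 < r -> 0 < kap ->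
  (forall s, 0 < s <= r -> is_derive u s (u' s)) ->
  (forall s, 0 < s <= r -> kap <= u' s) -> False.
Proof.
  intros Hlim Hr Hkap Du Hfloor.
  destruct (right_increments_small u Hlim (kap / 4)) as [d [Hd Hinc]]; [lra |].
  set (h := Rmin (d / 2) r).
  assert (Hh : 0 < h /\ h <= d / 2 /\ h <= r).
  { split; [apply Rmin_pos; lra | split; [apply Rmin_l | apply Rmin_r]]. }
  destruct (MVT_cor2 u u' (h / 2) h) as [xi [Hmvt Hxi]]; [lra | |].
  { intros c Hc. apply is_derive_Reals, Du. lra. }
  pose proof (Hfloor xi ltac:(lra)) as Hslope.
  pose proof (Rabs_def2 _ _ (Hinc h ltac:(lra))) as Hfull.
  pose proof (Rabs_def2 _ _ (Hinc (h / 2) ltac:(lra))) as Hhalf.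
  nra.
Qed.

Lemma larger_value_on_left (f : R -> R) (x l d : R) :
  is_derive f x l -> l < 0 -> 0 < d -> exists y, x - d < y < x /\ f x < f y.
Proof.
  intros Df Hl Hd. apply is_derive_Reals in Df.
  destruct (Df (- l / 2) ltac:(lra)) as [del Hdel].
  pose proof (cond_pos del) as Hdel0.
  assert (Hmin : 0 < Rmin del d /\ Rmin del d <= del /\ Rmin del d <= d).
  { split; [apply Rmin_pos; lra | split; [apply Rmin_l | apply Rmin_r]]. }
  set (h := - Rmin del d / 2).
  assert (Habs : Rabs h < del) by (unfold h; rewrite Rabs_left; lra).
  specialize (Hdel h ltac:(unfold h; lra) Habs).
  apply Rabs_def2 in Hdel.
  exists (x + h). split; [unfold h; lra |].
  set (q := (f (x + h) - f x) / h) in *.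
  assert (Hinc : f (x + h) - f x = q * h) by (unfold q; field; unfold h; lra).
  assert (Hneg : h < 0) by (unfold h; lra).
  nra.
Qed.

Lemma first_zero (f : R -> R) (x0 x1 : R) :
  x0 < x1 -> (forall x, x0 <= x <= x1 -> continuity_pt f x) ->
  f x0 < 0 -> 0 <= f x1 ->
  exists s, x0 < s <= x1 /\ f s = 0 /\ forall y, x0 <= y < s -> f y < 0.
Proof.
  intros H01 Hc H0 H1.
  set (E := fun x => x0 <= x <= x1 /\ forall y, x0 <= y <= x -> f y < 0).
  assert (HE0 : E x0).
  { split; [lra |]. intros y Hy. replace y with x0 by lra. exact H0. }
  destruct (completeness E) as [s [Hub Hleast]].
  { exists x1. intros x [Hx _]. lra. }
  { exists x0. exact HE0. }
  assert (Hs0 : x0 <= s) by (apply Hub, HE0).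
  assert (Hs1 : s <= x1) by (apply Hleast; intros x [Hx _]; lra).
  assert (Hbefore : forall y, x0 <= y < s -> f y < 0).
  { intros y Hy. destruct (Rlt_or_le (f y) 0) as [Hneg | Hnn]; [exact Hneg | exfalso].
    assert (Hbound : is_upper_bound E y).
    { intros x [_ Hx]. destruct (Rle_or_lt x y) as [Hxy | Hyx]; [exact Hxy |].
      pose proof (Hx y ltac:(lra)). lra. }
    apply Hleast in Hbound. lra. }
  (* if f s < 0, continuity pushes E beyond s *)
  assert (Hnonneg : 0 <= f s).
  { destruct (Rlt_or_le (f s) 0) as [Hneg | Hnn]; [exfalso | exact Hnn].
    assert (Hsx1 : s < x1) by (destruct (Req_dec s x1) as [-> | ]; lra).
    destruct (continuity_pt_eps f s (Hc s ltac:(lra)) (- f s) ltac:(lra))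
      as [d [Hd Hnear]].
    set (x := Rmin (s + d / 2) x1).
    assert (Hx : s < x /\ x <= s + d / 2 /\ x <= x1).
    { split; [apply Rmin_glb_lt; lra | split; [apply Rmin_l | apply Rmin_r]]. }
    assert (HEx : E x).
    { split; [lra |]. intros y Hy.
      destruct (Rlt_or_le y s) as [Hys | Hsy]; [apply Hbefore; lra |].
      assert (Hys : Rabs (y - s) < d) by (rewrite Rabs_right; lra).
      pose proof (Rabs_def2 _ _ (Hnear y Hys)). lra. }
    apply Hub in HEx. lra. }
  assert (Hs0' : x0 < s) by (destruct (Req_dec x0 s) as [<- | ]; lra).
  (* if f s > 0, continuity contradicts negativity just before s *)
  assert (Hnonpos : f s <= 0).
  { destruct (Rle_or_lt (f s) 0) as [Hnp | Hpos]; [exact Hnp | exfalso].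
    destruct (continuity_pt_eps f s (Hc s ltac:(lra)) (f s) Hpos) as [d [Hd Hnear]].
    set (y := Rmax x0 (s - d / 2)).
    assert (Hy : x0 <= y /\ s - d / 2 <= y /\ y < s).
    { split; [apply Rmax_l | split; [apply Rmax_r | apply Rmax_lub_lt; lra]]. }
    assert (Hys : Rabs (y - s) < d) by (rewrite Rabs_left; lra).
    pose proof (Rabs_def2 _ _ (Hnear y Hys)).
    pose proof (Hbefore y ltac:(lra)). lra. }
  exists s. split; [lra | split; [lra | exact Hbefore]].
Qed.

Lemma positivity_persists (f f' : R -> R) (x0 x1 : R) :
  (forall s, x0 <= s <= x1 -> is_derive f s (f' s)) ->
  (forall s, x0 <= s <= x1 -> 0 <= f s -> 0 <= f' s) ->
  0 < f x0 -> forall t, x0 <= t <= x1 -> 0 < f t.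
Proof.
  intros Df Hslope H0 t Ht.
  destruct (Rlt_or_le 0 (f t)) as [Hpos | Hnp]; [exact Hpos | exfalso].
  assert (Hx0t : x0 < t) by (destruct (Req_dec x0 t) as [<- | ]; lra).
  destruct (first_zero (fun x => - f x) x0 t) as [t1 [Ht1 [Hzero Hbefore]]];
    [lra | | lra | lra |].
  { intros x Hx. apply continuity_pt_opp.
    apply (is_derive_continuity_pt _ _ (f' x)), Df. lra. }
  destruct (MVT_cor2 f f' x0 t1) as [c [Hmvt Hc]]; [lra | |].
  { intros c Hc. apply is_derive_Reals, Df. lra. }
  pose proof (Hbefore c ltac:(lra)) as Hfc.
  pose proof (Hslope c ltac:(lra) ltac:(lra)) as Hf'c.
  nra.
Qed.

Lemma neg_flux_cases (a b r x : R) : 0 < r ->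
  (x = 0 /\ - (Rpower r a * signed_pow b x) = 0) \/
  (x < 0 /\ - (Rpower r a * signed_pow b x) = exp (a * ln r + (b + 1) * ln (- x))) \/
  (0 < x /\ - (Rpower r a * signed_pow b x) = - exp (a * ln r + (b + 1) * ln x)).
Proof.
  intros Hr. unfold signed_pow, Rpower.
  destruct (Req_EM_T x 0) as [Hx | Hx].
  - left. split; [exact Hx | ring].
  - destruct (Rlt_dec x 0) as [Hneg | Hneg].
    + right; left. split; [exact Hneg |]. rewrite Rabs_left by exact Hneg.
      replace (a * ln r + (b + 1) * ln (- x)) with (a * ln r + (b * ln (- x) + ln (- x)))
        by ring.
      rewrite !exp_plus, (exp_ln (- x)) by lra. ring.
    + right; right. split; [lra |]. rewrite Rabs_right by lra.
      replace (a * ln r + (b + 1) * ln x) with (a * ln r + (b * ln x + ln x)) by ring.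
      rewrite !exp_plus, exp_ln by lra. ring.
Qed.

Lemma slope_floor_from_flux (a b r1 c0 r x : R) :
  0 < a -> 0 <= b -> 0 < c0 -> 0 < r <= r1 ->
  - (Rpower r a * signed_pow b x) <= - c0 ->
  exp ((ln c0 - a * ln r1) / (b + 1)) <= x.
Proof.
  intros Ha Hb Hc0 Hr Hflux.
  destruct (neg_flux_cases a b r x ltac:(lra)) as [[_ E] | [[_ E] | [Hx E]]];
    rewrite E in Hflux.
  - lra.
  - pose proof (exp_pos (a * ln r + (b + 1) * ln (- x))). lra.
  - assert (Hlog : ln c0 <= a * ln r + (b + 1) * ln x).
    { apply exp_le_exp_iff. rewrite exp_ln by lra. lra. }
    assert (Hlnr : ln r <= ln r1) by (apply ln_le; lra).
    rewrite <- (exp_ln x) by exact Hx. apply exp_le_exp_iff.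
    apply (Rmult_le_reg_r (b + 1)); [lra |].
    replace ((ln c0 - a * ln r1) / (b + 1) * (b + 1)) with (ln c0 - a * ln r1)
      by (field; lra).
    nra.
Qed.

(* Algebraic core of the monotonicity of the barrier: for 0 < E <= 1 and
   th E^2 <= p, the quantity m - E (m + 2 th - 2 p) is nonnegative once
   4 th <= m, since it is at least (1 - E) (m - 2 th E (1 + E)). *)
Lemma barrier_slope_factor_nonneg (m th E p : R) :
  0 < E <= 1 -> 0 < th -> 4 * th <= m -> th * (E * E) <= p ->
  0 <= m - E * (m + 2 * th - 2 * p).
Proof.
  intros HE Hth Hm Hp.
  assert (Hfactor : 0 <= (1 - E) * (m - 2 * th * E - 2 * th * E * E)).
  { apply Rmult_le_pos; [lra |].
    assert (th * E <= th) by nra. assert (th * E * E <= th * E) by nra. nra. }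
  assert (0 <= 2 * E * (p - th * (E * E))) by (apply Rmult_le_pos; lra).
  nra.
Qed.

Lemma small_point_with_small_log (d L : R) :
  0 < d -> exists s, 0 < s < d /\ ln s < L.
Proof.
  intros Hd. set (Z := Rmin L (ln d) - 1).
  assert (HZ : Z < L /\ Z < ln d) by (unfold Z; pose proof (Rmin_l L (ln d));
    pose proof (Rmin_r L (ln d)); lra).
  exists (exp Z). split; [split; [apply exp_pos |] | rewrite ln_exp; lra].
  rewrite <- (exp_ln d) by exact Hd. apply exp_increasing; lra.
Qed.

Section RadialSolution.

Variables (a b g rho : R) (u : R -> R).
Hypothesis Hsol : is_solution a b g rho u.

Local Notation th := (theta a b g).
Local Notation m := (a - b - 1).
Local Notation k := (b + 1).

Definition flux (s : R) : R := - (Rpower s a * signed_pow b (Derive u s)).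

Lemma u_deriv (s : R) : 0 < s -> is_derive u s (Derive u s).
Proof.
  intros Hs. destruct Hsol as [_ [_ [Hex _]]]. apply Derive_correct, Hex, Hs.
Qed.

Lemma flux_deriv (s : R) : 0 < s -> is_derive flux s (exp (g * ln s) * exp (u s)).
Proof.
  intros Hs. destruct Hsol as [_ [_ [_ Hode]]].
  replace (exp (g * ln s) * exp (u s)) with (- (- (Rpower s g * exp (u s))))
    by (unfold Rpower; ring).
  apply (is_derive_opp (fun s => Rpower s a * signed_pow b (Derive u s))), Hode, Hs.
Qed.

Lemma flux_increasing (s t : R) : 0 < s -> s < t -> flux s < flux t.
Proof.
  intros Hs Hst.
  destruct (MVT_cor2 flux (fun x => exp (g * ln x) * exp (u x)) s t Hst)
    as [c [Hmvt Hc]].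
  { intros c Hc. apply is_derive_Reals, flux_deriv. lra. }
  assert (0 < exp (g * ln c) * exp (u c)) by (apply Rmult_lt_0_compat; apply exp_pos).
  nra.
Qed.

(* Step 1: the flux is positive.  If flux r <= 0, then flux <= flux (r/2) < 0
   on (0, r/2], which bounds u' below by a positive constant there. *)
Lemma flux_pos (s : R) : 0 < a -> 0 <= b -> 0 < s -> 0 < flux s.
Proof.
  intros Ha Hb Hs.
  destruct (Rlt_or_le 0 (flux s)) as [Hpos | Hnp]; [exact Hpos | exfalso].
  destruct Hsol as [_ [Hlim _]].
  set (r1 := s / 2).
  assert (Hr1 : flux r1 < flux s) by (apply flux_increasing; unfold r1; lra).
  apply (no_uniform_slope_floor u (Derive u) r1
           (exp ((ln (- flux r1) - a * ln r1) / (b + 1)))); [exact Hlim | unfold r1; lra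
           | apply exp_pos | intros x Hx; apply u_deriv; lra |].
  intros x Hx. apply (slope_floor_from_flux a b r1 (- flux r1) x); [lra | lra | lra | lra |].
  rewrite Ropp_involutive. fold (flux x).
  destruct (Req_dec x r1) as [-> | Hne]; [lra |].
  left; apply flux_increasing; lra.
Qed.

Lemma flux_formula (s : R) : 0 < a -> 0 <= b -> 0 < s ->
  Derive u s < 0 /\ flux s = exp (a * ln s + k * ln (- Derive u s)).
Proof.
  intros Ha Hb Hs. pose proof (flux_pos s Ha Hb Hs) as Hpos. unfold flux in Hpos |- *.
  destruct (neg_flux_cases a b s (Derive u s) Hs) as [[_ E] | [[Hneg E] | [_ E]]];
    rewrite E in Hpos |- *.
  - lra.
  - split; [exact Hneg | reflexivity].
  - pose proof (exp_pos (a * ln s + (b + 1) * ln (Derive u s))). lra.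
Qed.

Lemma u_near_initial : exists d, 0 < d /\ forall s, 0 < s < d -> rho - 1 < u s < rho + 1.
Proof.
  destruct Hsol as [Hu0 [Hlim _]].
  destruct (right_increments_small u Hlim 1) as [d [Hd Hinc]]; [lra |].
  exists (Rmin d 1). split; [apply Rmin_pos; lra |].
  intros s [Hs0 Hsd].
  pose proof (Rmin_l d 1). pose proof (Rmin_r d 1).
  pose proof (Rabs_def2 _ _ (Hinc s ltac:(lra))). rewrite Hu0 in *. lra.
Qed.

(* Where u >= rho - 1, the flux grows at least like r^{g+1}: by the mean
   value theorem on [s/2, s], flux s > (s/2) xi^g e^{u xi}. *)
Lemma flux_lower_bound (d s : R) : 0 < a -> 0 <= b ->
  (forall x, 0 < x < d -> rho - 1 < u x) -> 0 < s < d ->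
  exp ((g + 1) * ln s - (Rabs g + 1) * ln 2 + rho - 1) < flux s.
Proof.
  intros Ha Hb Hu Hs.
  destruct (MVT_cor2 flux (fun x => exp (g * ln x) * exp (u x)) (s / 2) s)
    as [xi [Hmvt Hxi]]; [lra | |].
  { intros c Hc. apply is_derive_Reals, flux_deriv. lra. }
  pose proof (flux_pos (s / 2) Ha Hb ltac:(lra)) as Hhalf.
  pose proof (Hu xi ltac:(lra)) as Huxi.
  assert (Hln2 : 0 < ln 2) by (rewrite <- ln_1; apply ln_increasing; lra).
  assert (Hlnxi : ln s - ln 2 < ln xi < ln s).
  { rewrite <- ln_div by lra. split; apply ln_increasing; lra. }
  assert (Hglog : g * ln s - Rabs g * ln 2 <= g * ln xi).
  { destruct (Rle_or_lt 0 g) as [Hg | Hg];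
      [rewrite Rabs_right by lra | rewrite Rabs_left by lra]; nra. }
  assert (Hhalf_exp : s - s / 2 = exp (ln s - ln 2)).
  { unfold Rminus at 2. rewrite exp_plus, exp_Ropp, !exp_ln by lra. field. }
  rewrite Hhalf_exp, <- !exp_plus in Hmvt.
  assert (exp ((g + 1) * ln s - (Rabs g + 1) * ln 2 + rho - 1)
          < exp (g * ln xi + u xi + (ln s - ln 2))) by (apply exp_increasing; lra).
  lra.
Qed.

Definition gap (s : R) : R := u s - u_star a b g s.

Definition barrier (s : R) : R := flux s - exp (k * ln th + m * ln s + 2 * gap s).

Definition barrier_slope (s : R) : R :=
  exp (g * ln s) * exp (u s)
  - exp (k * ln th + m * ln s + 2 * gap s) * (m / s + 2 * (Derive u s + th / s)).

Lemma gap_expand (s : R) : 0 < th -> 0 < m ->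
  gap s = u s - (k * ln th + ln m) + th * ln s.
Proof.
  intros Hth Hm. unfold gap, u_star.
  rewrite ln_mult by (try apply exp_pos; lra). unfold Rpower. rewrite ln_exp. ring.
Qed.

Lemma gap_deriv (s : R) : 0 < s -> is_derive gap s (Derive u s + th / s).
Proof.
  intros Hs. unfold gap, u_star.
  auto_derive; [split; [exists (Derive u s); apply u_deriv, Hs | auto] |].
  change (fun x => u x) with u. field. lra.
Qed.

Lemma barrier_deriv (s : R) : 0 < s -> is_derive barrier s (barrier_slope s).
Proof.
  intros Hs. pose proof (flux_deriv s Hs) as Dflux. pose proof (gap_deriv s Hs) as Dgap.
  unfold barrier, barrier_slope.
  auto_derive; [repeat split; auto; eexists; eauto |].
  change (fun x => flux x) with flux. change (fun x => gap x) with gap.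
  rewrite (is_derive_unique _ _ _ Dflux), (is_derive_unique _ _ _ Dgap). field. lra.
Qed.

(* Factorisation of H': with Y = th^k r^{m-1} e^W > 0, E = e^W, q = -u',
   H' = Y (m - E (m + 2 th - 2 r q)).  Uses g = th + m - 1. *)
Lemma barrier_slope_formula (s : R) : 0 < th -> 0 < m -> 0 < s ->
  barrier_slope s = exp (k * ln th + (m - 1) * ln s + gap s)
    * (m - exp (gap s) * (m + 2 * th - 2 * (s * - Derive u s))).
Proof.
  intros Hth Hm Hs. unfold barrier_slope.
  assert (Hsource : exp (g * ln s) * exp (u s) = exp (k * ln th + (m - 1) * ln s + gap s) * m).
  { rewrite <- (exp_ln m) at 2 by exact Hm. rewrite <- !exp_plus. f_equal.
    rewrite gap_expand by assumption. unfold theta. ring. }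
  assert (Hstar : exp (k * ln th + m * ln s + 2 * gap s)
                  = exp (k * ln th + (m - 1) * ln s + gap s) * exp (gap s) * s).
  { transitivity (exp (k * ln th + (m - 1) * ln s + gap s) * exp (gap s) * exp (ln s));
      [rewrite <- !exp_plus; f_equal; ring | rewrite exp_ln; [reflexivity | exact Hs]]. }
  rewrite Hsource, Hstar. field. lra.
Qed.

(* Step 2a: the barrier cannot decrease while W <= 0 and H >= 0.  Here
   H >= 0 means (r q)^k >= th^k e^{2W}, whence r q >= th e^{2W}. *)
Lemma barrier_slope_nonneg (s : R) : 0 < a -> 0 <= b -> 0 < th -> 0 < m -> 4 * th <= m ->
  0 < s -> gap s <= 0 -> 0 <= barrier s -> 0 <= barrier_slope s.
Proof.
  intros Ha Hb Hth Hm Hcond Hs Hgap Hbar.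
  destruct (flux_formula s Ha Hb Hs) as [Hneg Hflux].
  rewrite barrier_slope_formula by assumption.
  set (q := - Derive u s) in *.
  unfold barrier in Hbar. rewrite Hflux in Hbar.
  apply Rmult_le_pos; [left; apply exp_pos |].
  apply barrier_slope_factor_nonneg; [| exact Hth | exact Hcond |].
  - split; [apply exp_pos |]. rewrite <- exp_0. apply exp_le_exp_iff, Hgap.
  - assert (Hlog : k * ln th + m * ln s + 2 * gap s <= a * ln s + k * ln q)
      by (apply exp_le_exp_iff; lra).
    assert (Hlog' : ln th + 2 * gap s <= ln s + ln q) by nra.
    assert (Hq : 0 < q) by (unfold q; lra).
    assert (Hleft : th * (exp (gap s) * exp (gap s)) = exp (ln th + 2 * gap s)).
    { rewrite <- (exp_ln th) at 1 by exact Hth. rewrite <- !exp_plus. f_equal. ring. }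
    assert (Hright : s * q = exp (ln s + ln q)) by (rewrite exp_plus, !exp_ln; lra).
    rewrite Hleft, Hright. apply exp_le_exp_iff. exact Hlog'.
Qed.

(* Step 2b: at a zero of W where H > 0, W is strictly decreasing:
   H > 0 and W = 0 give r q > th, i.e. W' = th/r - q < 0. *)
Lemma gap_slope_neg (s : R) : 0 < a -> 0 <= b -> 0 < th -> 0 < s ->
  gap s = 0 -> 0 < barrier s -> Derive u s + th / s < 0.
Proof.
  intros Ha Hb Hth Hs Hgap Hbar.
  destruct (flux_formula s Ha Hb Hs) as [Hneg Hflux].
  unfold barrier in Hbar. rewrite Hflux, Hgap in Hbar.
  assert (Hlog : k * ln th + m * ln s + 2 * 0 < a * ln s + k * ln (- Derive u s))
    by (apply exp_lt_inv; lra).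
  assert (Hlog' : ln th < ln (s * - Derive u s)) by (rewrite ln_mult by lra; nra).
  apply ln_lt_inv in Hlog'; [| exact Hth | nra].
  apply (Rmult_lt_reg_l s); [exact Hs |]. field_simplify; lra.
Qed.

Lemma gap_neg_barrier_pos_near_zero (T : R) : 0 < a -> 0 <= b -> 0 < th -> 0 < m ->
  0 < T -> exists del, 0 < del < T /\ gap del < 0 /\ 0 < barrier del.
Proof.
  intros Ha Hb Hth Hm HT.
  destruct u_near_initial as [d [Hd Hu]].
  set (lnC := k * ln th + ln m).
  set (K0 := rho - 1 - (Rabs g + 1) * ln 2 - k * ln th - 2 * (rho + 1 - lnC)).
  set (K1 := lnC - rho - 1).
  destruct (small_point_with_small_log (Rmin d T) (Rmin (K0 / th) (K1 / th)))
    as [del [Hdel Hlog]]; [apply Rmin_pos; lra |].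
  pose proof (Rmin_l d T). pose proof (Rmin_r d T).
  pose proof (Rmin_l (K0 / th) (K1 / th)). pose proof (Rmin_r (K0 / th) (K1 / th)).
  assert (HK0 : th * ln del < K0).
  { replace K0 with (th * (K0 / th)) by (field; lra). apply Rmult_lt_compat_l; lra. }
  assert (HK1 : th * ln del < K1).
  { replace K1 with (th * (K1 / th)) by (field; lra). apply Rmult_lt_compat_l; lra. }
  pose proof (Hu del ltac:(lra)) as Hudel.
  assert (Hgap : gap del < rho + 1 - lnC + th * ln del)
    by (unfold lnC; rewrite gap_expand by lra; lra).
  exists del. split; [lra | split; [unfold K1 in HK1; lra |]].
  pose proof (flux_lower_bound d del Ha Hb (fun x Hx => proj1 (Hu x Hx)) ltac:(lra))
    as Hflux.
  assert (exp (k * ln th + m * ln del + 2 * gap del)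
          < exp ((g + 1) * ln del - (Rabs g + 1) * ln 2 + rho - 1)).
  { apply exp_increasing. replace (g + 1) with (th + m) by (unfold theta; ring).
    unfold K0 in HK0. lra. }
  unfold barrier. lra.
Qed.

(* The solution never meets u*: otherwise, with del from step 3 and s0 the
   first zero of W after del, H > 0 on [del, s0] (step 2a), so W'(s0) < 0
   (step 2b), contradicting W < 0 on [del, s0) and W(s0) = 0. *)
Lemma gap_never_vanishes (T : R) : 0 < a -> 0 <= b -> 0 < th -> 0 < m -> 4 * th <= m ->
  0 < T -> gap T <> 0.
Proof.
  intros Ha Hb Hth Hm Hcond HT HgapT.
  destruct (gap_neg_barrier_pos_near_zero T Ha Hb Hth Hm HT)
    as [del [Hdel [Hgap_del Hbar_del]]].
  destruct (first_zero gap del T) as [s0 [Hs0 [Hgap_s0 Hbefore]]]; [lra | | lra | lra |].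
  { intros x Hx. apply (is_derive_continuity_pt _ _ _ (gap_deriv x ltac:(lra))). }
  assert (Hbar_s0 : 0 < barrier s0).
  { apply (positivity_persists barrier barrier_slope del s0); [| | exact Hbar_del | lra].
    - intros s Hs. apply barrier_deriv. lra.
    - intros s Hs Hbar. apply barrier_slope_nonneg; try assumption; [lra |].
      destruct (Req_dec s s0) as [-> | Hne]; [lra | left; apply Hbefore; lra]. }
  destruct (larger_value_on_left gap s0 _ (s0 - del) (gap_deriv s0 ltac:(lra))
              (gap_slope_neg s0 Ha Hb Hth ltac:(lra) Hgap_s0 Hbar_s0) ltac:(lra))
    as [y [Hy Hgy]].
  pose proof (Hbefore y ltac:(lra)). lra.
Qed.

End RadialSolution.

Theorem theorem1p7 (a b g rho : R) (u : R -> R) :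
  a > b + 1 -> b >= 0 -> theta a b g > 0 ->
  a - b - 1 >= 4 * theta a b g * (b + 1) ->
  is_solution a b g rho u ->
  forall r, 0 < r -> u r <> u_star a b g r.
Proof.
  intros Hab Hb Hth Hcond Hsol r Hr Hcontact.
  (* since b + 1 >= 1, the hypothesis gives the needed 4 th <= a - b - 1 *)
  assert (Hcond' : 4 * theta a b g <= a - b - 1) by nra.
  apply (gap_never_vanishes a b g rho u Hsol r); try lra.
  unfold gap. rewrite Hcontact. ring.
Qed.
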